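(* Let $\mathcal{I}$ be a proper admissible ideal on $\omega$ and let $X$ be a zero-dimensional Lindel\''of space. Then $X$ has the $\mathcal{I}$-Hurewicz property if and only if $X$ has the star-$\mathcal{I}$-Hurewicz property.
   Context: A space is zero-dimensional if it has a base of clopen sets. $St(A,\mathcal{P})=\bigcup\{P\in\mathcal{P}: P\cap A\ne\emptyset\}$. $X$ has the $\mathcal{I}$-Hurewicz property if for each sequence $\langle\mathcal{U}_n\rangle$ of open covers there are finite $\mathcal{V}_n\subseteq\mathcal{U}_n$ with $\{n : x\notin\bigcup\mathcal{V}_n\}\in\mathcal{I}$ for each $x\in X$. $X$ has the star-$\mathcal{I}$-Hurewicz property if for each sequence $\langle\mathcal{U}_n\rangle$ of open covers there are finite $\mathcal{V}_n\subseteq\mathcal{U}_n$ with $\{n : x\notin St(\bigcup\mathcal{V}_n,\mathcal{U}_n)\}\in\mathcal{I}$ for each $x\in X$. *)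

From HB Require Import structures.
From mathcomp Require Import all_boot all_order all_algebra.
From mathcomp Require Import all_classical topology.
Set Implicit Arguments. Unset Strict Implicit. Unset Printing Implicit Defensive.
Local Open Scope classical_set_scope.

Definition is_ideal (I : set (set nat)) : Prop :=
  I set0 /\
  (forall A B, B `<=` A -> I A -> I B) /\
  (forall A B, I A -> I B -> I (A `|` B)).
Definition proper_ideal (I : set (set nat)) : Prop := ~ I setT.
Definition admissible_ideal (I : set (set nat)) : Prop := forall n : nat, I [set n].

Definition open_cover {X : topologicalType} (U : set (set X)) : Prop :=
  (forall u, U u -> open u) /\ \bigcup_(u in U) u = setT.

Definition clopen_base_zero_dim (X : topologicalType) : Prop :=
  exists B : set (set X),
    (forall b, B b -> open b /\ closed b) /\
    (forall (A : set X) (x : X), open A -> A x -> exists2 b, B b & b x /\ b `<=` A).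

Definition lindelof (X : topologicalType) : Prop :=
  forall U : set (set X), open_cover U ->
    exists2 V : set (set X), V `<=` U /\ countable V & \bigcup_(v in V) v = setT.

Definition star {X : Type} (A : set X) (P : set (set X)) : set X :=
  \bigcup_(p in [set p | P p /\ p `&` A !=set0]) p.

Definition I_Hurewicz (I : set (set nat)) (X : topologicalType) : Prop :=
  forall U : nat -> set (set X), (forall n, open_cover (U n)) ->
    exists V : nat -> set (set X),
      (forall n, V n `<=` U n /\ finite_set (V n)) /\
      (forall x : X, I [set n | ~ (\bigcup_(v in V n) v) x]).

Definition star_I_Hurewicz (I : set (set nat)) (X : topologicalType) : Prop :=
  forall U : nat -> set (set X), (forall n, open_cover (U n)) ->
    exists V : nat -> set (set X),
      (forall n, V n `<=` U n /\ finite_set (V n)) /\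
      (forall x : X, I [set n | ~ star (\bigcup_(v in V n) v) (U n) x]).

From mathcomp Require Import all_boot all_classical topology sequences.
Local Open Scope classical_set_scope.

(** A union of members of a cover U lies inside its own U-star, so the
    I-Hurewicz property implies the star version in every space.  Conversely,
    in a zero-dimensional Lindelöf space every open cover U is refined by a
    countable clopen cover, and disjointifying an enumeration of it gives an
    open partition W refining U.  For a partition, the W-star of a union of
    members of W is that union itself; so the star selections for the covers W
    are already selections in the I-Hurewicz sense, and replacing each selected
    member of W by a member of U containing it finishes the proof. *)

Section Star.
Variable T : Type.
Implicit Types (A : set T) (P V : set (set T)).

Lemma sub_star A P : A `<=` \bigcup_(p in P) p -> A `<=` star A P.
Proof.
move=> AP x Ax; have [p Pp px] := AP x Ax.
by exists p => //; split => //; exists x.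
Qed.

Lemma star_bigcup_trivIset P V : trivIset P id -> V `<=` P ->
  star (\bigcup_(v in V) v) P `<=` \bigcup_(v in V) v.
Proof.
move=> tP VP x [p [Pp [y [py [v Vv vy]]]] px].
by exists v => //; rewrite -(tP p v Pp (VP v Vv)) //; exists y.
Qed.

End Star.

(* Empty members are exempt, so [set0] can pad an enumeration of a cover. *)
Definition refines {T} (W U : set (set T)) :=
  forall w, W w -> w !=set0 -> exists2 u, U u & w `<=` u.

Lemma refines_finite_subfamily T (U W V : set (set T)) :
  refines W U -> V `<=` W -> finite_set V ->
  exists V' : set (set T),
    [/\ V' `<=` U, finite_set V' & \bigcup_(v in V) v `<=` \bigcup_(u in V') u].
Proof.
move=> WU VW finV.
have /boolp.choice[g gP] :
    forall v, exists u, V v /\ v !=set0 -> U u /\ v `<=` u.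
  move=> v; have [[Vv v0]|nvV] := pselect (V v /\ v !=set0).
    by have [u Uu vu] := WU v (VW v Vv) v0; exists u.
  by exists set0 => /nvV.
exists (g @` [set v | V v /\ v !=set0]); split.
- by move=> _ [v vV <-]; case: (gP v vV).
- by apply: finite_image; apply: sub_finite_set finV => v [].
- move=> x [v Vv vx]; have vV : V v /\ v !=set0 by split => //; exists x.
  by exists (g v); [exists v | case: (gP v vV) => _; apply].
Qed.

Lemma I_Hurewicz_star (I : set (set nat)) (X : topologicalType) :
  (forall A B, B `<=` A -> I A -> I B) ->
  I_Hurewicz I X -> star_I_Hurewicz I X.
Proof.
move=> Isub hurX U Ucov; have [V [VU Vx]] := hurX U Ucov.
exists V; split => // x; apply: Isub (Vx x) => n /=; apply: contra_not.
by apply: sub_star; rewrite (Ucov n).2.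
Qed.

Definition has_disjoint_open_refinements (X : topologicalType) :=
  forall U : set (set X), open_cover U ->
    exists2 W : set (set X), open_cover W /\ trivIset W id & refines W U.

Lemma star_I_Hurewicz_I_Hurewicz (I : set (set nat)) (X : topologicalType) :
  (forall A B, B `<=` A -> I A -> I B) ->
  has_disjoint_open_refinements X ->
  star_I_Hurewicz I X -> I_Hurewicz I X.
Proof.
move=> Isub refX shurX U Ucov.
have /boolp.choice[W WP] : forall n, exists W : set (set X),
    (open_cover W /\ trivIset W id) /\ refines W (U n).
  by move=> n; have [W] := refX _ (Ucov n); exists W.
have [S [SW Sx]] := shurX W (fun n => (WP n).1.1).
have /boolp.choice[V VP] : forall n, exists V : set (set X), [/\ V `<=` U n,
    finite_set V & \bigcup_(s in S n) s `<=` \bigcup_(v in V) v].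
  by move=> n; apply: refines_finite_subfamily (WP n).2 (SW n).1 (SW n).2.
exists V; split => [n|x]; first by case: (VP n).
apply: Isub (Sx x) => n /=; apply: contra_not => Sst.
case: (VP n) => _ _; apply.
exact: star_bigcup_trivIset (WP n).1.2 (SW n).1 _ Sst.
Qed.

Lemma clopen_refinement {X : topologicalType} {U : set (set X)} :
  clopen_base_zero_dim X -> open_cover U ->
  exists2 C : set (set X), open_cover C /\ C `<=` clopen & refines C U.
Proof.
move=> [B [Bclopen Bbase]] [Uopen Ucov].
exists [set b | B b /\ exists2 u, U u & b `<=` u]; last by move=> b [].
split; last by move=> b [/Bclopen].
split; first by move=> b [/Bclopen []].
apply/seteqP; split => // x _.
have [u Uu ux] : (\bigcup_(u in U) u) x by rewrite Ucov.
have [b Bb [bx bu]] := Bbase u x (Uopen u Uu) ux.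
by exists b => //; split => //; exists u.
Qed.

Lemma countable_enum_cover {T} {D : set (set T)} : countable D ->
  exists2 c : nat -> set T,
    (forall k, D (c k) \/ c k = set0) & \bigcup_k c k = \bigcup_(d in D) d.
Proof.
move=> /pfcard_geP[->|/surjfunPex[c ->]].
  by exists (fun=> set0) => [k|]; [right|rewrite bigcup_set0 bigcup0].
by exists c => [k|]; [left; exists k | rewrite bigcup_image].
Qed.

Lemma clopen_seqDU {X : topologicalType} {c : nat -> set X} n :
  (forall k, clopen (c k)) -> clopen (seqDU c n).
Proof.
move=> cclopen; rewrite /seqDU setDE; apply: clopenI => //.
apply: (clopenC set0); apply: big_ind => //; [exact: clopen0 | exact: clopenU].
Qed.

Lemma zero_dim_lindelof_disjoint_refinements (X : topologicalType) :
  clopen_base_zero_dim X -> lindelof X -> has_disjoint_open_refinements X.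
Proof.
move=> zdX linX U Ucov.
have [C [Ccov Cclopen] CU] := clopen_refinement zdX Ucov.
have [D [DC Dcount] Dcov] := linX C Ccov.
have [c cD ccov] := countable_enum_cover Dcount.
have cclopen k : clopen (c k).
  by case: (cD k) => [/DC/Cclopen //|->]; exact: clopen0.
exists (range (seqDU c)); first split; first split.
- by move=> _ [k _ <-]; case: (clopen_seqDU k cclopen).
- by rewrite bigcup_image -seqDU_bigcup_eq ccov Dcov.
- exact: (trivIset_image (F := id) (trivIset_seqDU c)).
- move=> _ [k _ <-] [x skx]; have ckx := subset_seqDU skx.
  case: (cD k) => [/DC Ck|ck0]; last by rewrite ck0 in ckx.
  have [u Uu cku] := CU _ Ck (ex_intro _ x ckx).
  by exists u => //; apply: subset_trans cku; exact: subset_seqDU.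
Qed.

Theorem mainTheorem14 (I : set (set nat)) (X : topologicalType) :
  is_ideal I -> proper_ideal I -> admissible_ideal I ->
  clopen_base_zero_dim X -> lindelof X ->
  (I_Hurewicz I X <-> star_I_Hurewicz I X).
Proof.
move=> [_ [Isub _]] _ _ zdX linX; split; first exact: I_Hurewicz_star.
apply: star_I_Hurewicz_I_Hurewicz => //.
exact: zero_dim_lindelof_disjoint_refinements.
Qed.
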